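(* Let $x\in\{\text{stage},\text{stage2},\text{CF2}\}$ and let $\sigma_x^{\cap}$ be the skeptical mode of $\sigma_x$. Then there exist argumentation frameworks $AF=(AR,Attacks)$ and $AF'=(AR',Attacks')$ with $AF\preceq_N AF'$ such that the following statement does NOT hold: $$\forall E\in\sigma_x^{\cap}(AF)\ \exists E'\in\sigma_x^{\cap}(AF') \text{ such that } (E'\not\subseteq AR\ \lor\ E'=E).$$
   Context: An argumentation framework is a pair $AF=(AR,Attacks)$ with $AR$ a finite set and $Attacks\subseteq AR\times AR$; $a$ attacks $b$ iff $(a,b)\in Attacks$; a set $S$ attacks $b$ iff some element of $S$ attacks $b$. An argumentation semantics $\sigma$ assigns to each $AF$ a set $\sigma(AF)$ of subsets of $AR$. $AF\preceq_N AF'$ (normal expansion) iff $AR\subseteq AR'$, $Attacks\subseteq Attacks'$ and no $(a,b)\in Attacks'\setminus Attacks$ has $a,b\in AR$. Skeptical mode: $\sigma^{\cap}(AF)=\{\bigcap_{E\in\sigma(AF)}E\}$. $S\subseteq AR$ is conflict-free iff no element of $S$ attacks an element of $S$. $S^+=\{b: \text{some } a\in S \text{ attacks } b\}$. A naive extension is a $\subseteq$-maximal conflict-free set. A stage extension is a conflict-free $S$ such that no conflict-free $S'$ has $S'\cup S'^+\supsetneq S\cup S^+$. Attack sequence: $\langle a_1,\dots,a_n\rangle$ of pairwise distinct arguments with $(a_i,a_{i+1})\in Attacks$; $b$ is reachable from $a$ iff such a sequence has $a_1=a$, $a_n=b$. The strongly connected components (SCCs) of $AF$ are the maximal sets of mutually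 reachable arguments; $SCCS_{AF}$ is the set of them. For $S\subseteq AR$, the restriction $AF\downarrow_S=(S, Attacks\cap(S\times S))$. For an SCC $S$ and $E\subseteq AR$: $S^-_{out}=\{a\notin S: a \text{ attacks some element of } S\}$; $D_{AF}(S,E)=\{a\in S: E\cap S^-_{out} \text{ attacks } a\}$; $P_{AF}(S,E)=\{a\in S: E\cap S^-_{out}\text{ does not attack } a \text{ and } \exists b\in S^-_{out} \text{ attacking } a \text{ such that } E \text{ does not attack } b\}$; $U_{AF}(S,E)=S\setminus(D_{AF}(S,E)\cup P_{AF}(S,E))$; $UP_{AF}(S,E)=U_{AF}(S,E)\cup P_{AF}(S,E)$. CF2: $E\subseteq AR$ is a CF2 extension of $AF$ iff either $|SCCS_{AF}|=1$ and $E$ is a naive extension of $AF$, or $|SCCS_{AF}|>1$ and for every $S\in SCCS_{AF}$, $E\cap S$ is a CF2 extension of $AF\downarrow_{UP_{AF}(S,E)}$. Stage2 is defined identically with ''naive extension'' replaced by ''stage extension''. $\sigma_x(AF)$ denotes the set of all $x$-extensions. *)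

From mathcomp Require Import all_boot.
Set Implicit Arguments. Unset Strict Implicit. Unset Printing Implicit Defensive.

Section AF.
Variable T : finType.

Record AF := mkAF {
  AR : {set T};
  Att : {set T * T};
  Att_wf : Att \subset setX AR AR }.

Definition set_attacks (Att : {set T * T}) (S : {set T}) (b : T) : bool :=
  [exists a in S, (a, b) \in Att].

Definition conflict_free (Att : {set T * T}) (S : {set T}) : bool :=
  [forall a in S, forall b in S, (a, b) \notin Att].

Definition plus (Att : {set T * T}) (S : {set T}) : {set T} :=
  [set b | set_attacks Att S b].

Definition naive (ar : {set T}) (Att : {set T * T}) (S : {set T}) : Prop :=
  S \subset ar /\ conflict_free Att S /\
  forall S' : {set T}, S' \subset ar -> conflict_free Att S' -> S \subset S' -> S' = S.

Definition stage (ar : {set T}) (Att : {set T * T}) (S : {set T}) : Prop :=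
  S \subset ar /\ conflict_free Att S /\
  ~ (exists S' : {set T}, S' \subset ar /\ conflict_free Att S' /\
       (S :|: plus Att S) \proper (S' :|: plus Att S')).

(* b reachable from a: a in AR and there is an attack path from a to b
   (equivalently, a path with pairwise distinct arguments). *)
Definition reachable (ar : {set T}) (Att : {set T * T}) (a b : T) : bool :=
  (a \in ar) && connect (fun x y => (x, y) \in Att) a b.

Definition scc_of (ar : {set T}) (Att : {set T * T}) (a : T) : {set T} :=
  [set b in ar | reachable ar Att a b && reachable ar Att b a].

Definition SCCs (ar : {set T}) (Att : {set T * T}) : {set {set T}} :=
  [set scc_of ar Att a | a in ar].

Definition S_out_minus (Att : {set T * T}) (S : {set T}) : {set T} :=
  [set a | (a \notin S) && [exists b in S, (a, b) \in Att]].

Definition D_set (Att : {set T * T}) (S E : {set T}) : {set T} :=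
  [set a in S | set_attacks Att (E :&: S_out_minus Att S) a].

Definition P_set (Att : {set T * T}) (S E : {set T}) : {set T} :=
  [set a in S | ~~ set_attacks Att (E :&: S_out_minus Att S) a &&
     [exists b in S_out_minus Att S, ((b, a) \in Att) && ~~ set_attacks Att E b]].

Definition U_set (Att : {set T * T}) (S E : {set T}) : {set T} :=
  S :\: (D_set Att S E :|: P_set Att S E).

Definition UP_set (Att : {set T * T}) (S E : {set T}) : {set T} :=
  U_set Att S E :|: P_set Att S E.

(* SCC-recursive scheme with base semantics [base]; [k] is fuel
   (k = #|AR| suffices since UP(S,E) is a proper subset of AR whenever
   there is more than one SCC). *)
Fixpoint scc_rec (base : {set T} -> {set T * T} -> {set T} -> Prop)
    (k : nat) (ar : {set T}) (Att : {set T * T}) (E : {set T}) : Prop :=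
  E \subset ar /\
  if #|SCCs ar Att| <= 1 then base ar Att E
  else match k with
       | 0 => False
       | k'.+1 => forall S, S \in SCCs ar Att ->
           let up := UP_set Att S E in
           scc_rec base k' up (Att :&: setX up up) (E :&: S)
       end.

Definition stage_ext (F : AF) (E : {set T}) : Prop := stage (AR F) (Att F) E.
Definition cf2_ext (F : AF) (E : {set T}) : Prop :=
  scc_rec naive #|AR F| (AR F) (Att F) E.
Definition stage2_ext (F : AF) (E : {set T}) : Prop :=
  scc_rec stage #|AR F| (AR F) (Att F) E.

(* E is in the skeptical mode sigma^cap(F): E is the intersection of all
   sigma-extensions (taken inside AR). *)
Definition skeptical (sigma : AF -> {set T} -> Prop) (F : AF) (E : {set T}) : Prop :=
  forall a, a \in E <-> (a \in AR F /\ forall E', sigma F E' -> a \in E').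

Definition normal_expansion (F F' : AF) : Prop :=
  AR F \subset AR F' /\ Att F \subset Att F' /\
  forall a b, (a, b) \in Att F' -> (a, b) \notin Att F ->
    ~ (a \in AR F /\ b \in AR F).

End AF.

Inductive sem_kind := Stage | Stage2 | CF2.

Definition sigma_of (x : sem_kind) (T : finType) : AF T -> {set T} -> Prop :=
  match x with
  | Stage => @stage_ext T
  | Stage2 => @stage2_ext T
  | CF2 => @cf2_ext T
  end.

(** Take a single unattacked argument [a] and expand it normally by a new
    argument [b], with [a] and [b] attacking each other.  Before the expansion
    [{a}] is the only extension, so the skeptical extension is [{a}].  After
    it, both [{a}] and [{b}] are stable, hence naive and stage; as the new
    framework is strongly connected, the SCC-recursive semantics coincide with
    their base semantics there, so the skeptical extension is empty: a subset
    of the old arguments that differs from [{a}]. *)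
From mathcomp Require Import all_boot.
Set Implicit Arguments. Unset Strict Implicit. Unset Printing Implicit Defensive.

Section ArgumentationFrameworks.
Variable T : finType.
Implicit Types (ar S E : {set T}) (Att : {set T * T}).

Lemma card_SCCs_le1 ar Att :
  {in ar &, forall a b, reachable ar Att a b} -> #|SCCs ar Att| <= 1.
Proof.
move=> reach; apply/card_le1_eqP => _ _ /imsetP[a a_ar ->] /imsetP[b b_ar ->].
by apply/setP => c; rewrite !inE; case c_ar: (c \in ar); rewrite //= !reach.
Qed.

Lemma scc_rec_le1 base k ar Att E : #|SCCs ar Att| <= 1 ->
  scc_rec base k ar Att E <-> E \subset ar /\ base ar Att E.
Proof. by case: k => [|k] /= ->. Qed.

Lemma conflict_freeP Att S :
  reflect {in S &, forall a b, (a, b) \notin Att} (conflict_free Att S).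
Proof.
apply: (iffP forallP) => [cf a b aS bS | cf a].
  by move/implyP: (cf a) => /(_ aS) /forallP /(_ b) /implyP; apply.
by apply/implyP => aS; apply/forallP => b; apply/implyP; apply: cf.
Qed.

Lemma in_plus Att S b : (b \in plus Att S) = [exists a in S, (a, b) \in Att].
Proof. by rewrite inE. Qed.

Definition stable ar Att S : Prop :=
  [/\ S \subset ar, conflict_free Att S & ar \subset S :|: plus Att S].

Lemma stable_naive ar Att S : stable ar Att S -> naive ar Att S.
Proof.
case=> S_ar cfS range; split=> //; split=> // S' S'_ar /conflict_freeP cfS' sSS'.
apply/eqP; rewrite eqEsubset sSS' andbT; apply/subsetP => c cS'.
move/subsetP: range => /(_ c (subsetP S'_ar c cS')).
rewrite inE in_plus => /orP[// | /exists_inP[a aS aAc]].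
by have := cfS' a c (subsetP sSS' a aS) cS'; rewrite aAc.
Qed.

Lemma stable_stage ar Att S :
  Att \subset setX ar ar -> stable ar Att S -> stage ar Att S.
Proof.
move=> Att_ar [S_ar cfS range]; split=> //; split=> // -[S' [S'_ar [_]]].
rewrite properE => /andP[_ /negP]; apply.
rewrite (subset_trans _ range) // subUset S'_ar; apply/subsetP => b.
by rewrite in_plus => /exists_inP[a _ /(subsetP Att_ar)]; rewrite inE => /andP[].
Qed.

Lemma conflict_free_set0 S : conflict_free set0 S.
Proof. by apply/conflict_freeP => a b; rewrite inE. Qed.

Lemma plus_set0 S : plus set0 S = set0.
Proof. by apply/setP => b; rewrite in_plus inE; apply/exists_inP => -[a _]; rewrite inE. Qed.

Lemma naive_set0 ar S : naive ar set0 S -> S = ar.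
Proof. by case=> S_ar [_ max]; rewrite (max ar) // conflict_free_set0. Qed.

Lemma stage_set0 ar S : stage ar set0 S -> S = ar.
Proof.
case=> S_ar [_ max]; apply/eqP; rewrite eqEproper S_ar /=; apply/negP => ltSar.
by apply: max; exists ar; rewrite !plus_set0 !setU0 conflict_free_set0.
Qed.

Lemma skeptical_of_unique (sigma : AF T -> {set T} -> Prop) F :
  (forall E, sigma F E -> AR F \subset E) -> skeptical sigma F (AR F).
Proof.
move=> least a; split=> [a_ar | [] //]; split=> // E /least /subsetP; exact.
Qed.

Lemma skeptical_disjoint (sigma : AF T -> {set T} -> Prop) F E1 E2 E :
  sigma F E1 -> sigma F E2 -> [disjoint E1 & E2] -> skeptical sigma F E -> E = set0.
Proof.
move=> sE1 sE2 dis skE; apply/setP => a; rewrite inE; apply/negP => /skE[_ inall].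
by move: dis => /disjointFr /(_ (inall _ sE1)); rewrite (inall _ sE2).
Qed.

End ArgumentationFrameworks.

Definition base_sem (x : sem_kind) (T : finType) :
    {set T} -> {set T * T} -> {set T} -> Prop :=
  if x is CF2 then @naive T else @stage T.

Lemma sigma_of_le1 x (T : finType) (F : AF T) E :
  #|SCCs (AR F) (Att F)| <= 1 -> sigma_of x F E <-> base_sem x (AR F) (Att F) E.
Proof.
have base_sub : base_sem x (AR F) (Att F) E -> E \subset AR F.
  by case: x => -[].
move=> le1; case: x base_sub => /= base_sub; first by [];
by apply: iff_trans (scc_rec_le1 _ _ _ le1) _; split=> [[] // | ]; split=> //; apply: base_sub.
Qed.

Lemma stable_base_sem x (T : finType) (F : AF T) S :
  stable (AR F) (Att F) S -> base_sem x (AR F) (Att F) S.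
Proof.
by case: x => /= stS; [exact: stable_stage (Att_wf F) stS.. | exact: stable_naive].
Qed.

Lemma base_sem_set0 x (T : finType) (ar S : {set T}) :
  base_sem x ar set0 S -> S = ar.
Proof. by case: x; [exact: stage_set0.. | exact: naive_set0]. Qed.

Definition lone_arg : AF bool := @mkAF bool [set true] set0 (sub0set _).

Lemma two_cycle_wf : [set (true, false); (false, true)] \subset setX [set: bool] [set: bool].
Proof. by apply/subsetP => -[a b]; rewrite !inE. Qed.

Definition two_cycle : AF bool := mkAF two_cycle_wf.

Lemma two_cycle_att a b : ((a, b) \in Att two_cycle) = (a != b).
Proof. by case: a; case: b; rewrite !inE. Qed.

Lemma lone_arg_expands : normal_expansion lone_arg two_cycle.
Proof.
split; first exact: subsetT; split; first exact: sub0set.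
move=> a b; rewrite two_cycle_att /= !inE => a_neq_b _ [/eqP a_true /eqP b_true].
by rewrite a_true b_true in a_neq_b.
Qed.

Lemma lone_arg_SCCs : #|SCCs (AR lone_arg) (Att lone_arg)| <= 1.
Proof.
apply: card_SCCs_le1 => a b; rewrite /= !inE => /eqP-> /eqP->.
by rewrite /reachable inE eqxx connect0.
Qed.

Lemma two_cycle_SCCs : #|SCCs (AR two_cycle) (Att two_cycle)| <= 1.
Proof.
apply: card_SCCs_le1 => a b _ _; rewrite /reachable inE /=.
have [-> // | a_neq_b] := eqVneq a b; exact: connect1 (etrans (two_cycle_att a b) a_neq_b).
Qed.

Lemma lone_arg_sigma x E : sigma_of x lone_arg E -> E = [set true].
Proof. by move/(sigma_of_le1 _ _ lone_arg_SCCs)/base_sem_set0. Qed.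

Lemma two_cycle_stable b : stable (AR two_cycle) (Att two_cycle) [set b].
Proof.
split; first exact: subsetT.
  by apply/conflict_freeP => a c; rewrite two_cycle_att !inE => /eqP-> /eqP->; rewrite eqxx.
apply/subsetP => c _; rewrite !inE; have [// | c_neq_b] := eqVneq c b.
apply/exists_inP; exists b; first exact: set11.
by rewrite two_cycle_att eq_sym.
Qed.

Lemma two_cycle_sigma x b : sigma_of x two_cycle [set b].
Proof. exact/(sigma_of_le1 _ _ two_cycle_SCCs)/stable_base_sem/two_cycle_stable. Qed.

Theorem proposition38 (x : sem_kind) :
  exists (T : finType) (F F' : AF T),
    normal_expansion F F' /\
    ~ (forall E : {set T}, skeptical (@sigma_of x T) F E ->
         exists E', skeptical (@sigma_of x T) F' E' /\
           (~ (E' \subset AR F) \/ E' = E)).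
Proof.
exists bool, lone_arg, two_cycle; split; first exact: lone_arg_expands.
have skeptical_lone : skeptical (@sigma_of x _) lone_arg [set true].
  by apply: skeptical_of_unique => E /lone_arg_sigma ->.
have skeptical_two_cycle E' : skeptical (@sigma_of x _) two_cycle E' -> E' = set0.
  apply: skeptical_disjoint (two_cycle_sigma x true) (two_cycle_sigma x false) _.
  by rewrite disjoints1 inE.
move=> /(_ _ skeptical_lone) [E' [/skeptical_two_cycle -> []]].
  by rewrite sub0set.
by move/setP => /(_ true); rewrite !inE.
Qed.
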